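(* Let $n>1$, $1\le k\le\lceil\log_2 n\rceil$ and $p\in[0,1]$. Any (possibly randomized) algorithm for Locate that runs in $k$ rounds and succeeds with probability at least $p$ on every input of size $n$ issues, on its worst-case input, at least $\frac{k}{4e}\,p\,n^{1/k}-1-pk$ queries in expectation.
   Context: Locate problem in the rank query model: there is a vector $\vec{x}=(x_1,\ldots,x_n)$ whose ranks form an unknown permutation of $\{1,\ldots,n\}$; an index $i$ is given and the goal is to output $\mathrm{rank}(x_i)$. Queries have the form ''How is $\mathrm{rank}(x_j)$ compared to $m$?'', with answer ''$<$'', ''$=$'' or ''$>$''. An algorithm runs in $k$ rounds if in each of $k$ rounds it submits a set of queries chosen depending only on answers of earlier rounds (and its randomness), then receives all answers. A randomized algorithm is a distribution over deterministic algorithms; the expectation is over its randomness. *)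

From HB Require Import structures.
From mathcomp Require Import all_boot all_order all_algebra all_fingroup.
From mathcomp Require Import all_classical all_reals all_analysis.
Set Implicit Arguments. Unset Strict Implicit. Unset Printing Implicit Defensive.

(* Ranks: the input vector x of length n is described by a permutation
   sigma : 'S_n ; rank(x_j) = (sigma j).+1 \in {1,..,n}.  The given index is
   i : 'I_n. *)

Definition rank_of (n : nat) (s : 'S_n) (j : 'I_n) : nat := (s j).+1.

Definition query (n : nat) := ('I_n * nat)%type.

Definition answer (n : nat) (s : 'S_n) (q : query n) : comparison :=
  let r := rank_of s q.1 in
  if r < q.2 then Lt else if r == q.2 then Eq else Gt.

Definition transcript (n : nat) := seq (seq (query n * comparison)).

Record det_alg (n : nat) := DetAlg {
  next_queries : 'I_n -> transcript n -> seq (query n);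
  output : 'I_n -> transcript n -> nat }.

Fixpoint run (n : nat) (A : det_alg n) (s : 'S_n) (i : 'I_n) (r : nat)
  : transcript n :=
  match r with
  | 0 => [::]
  | r'.+1 => let t := run A s i r' in
             rcons t [seq (q, answer s q) | q <- next_queries A i t]
  end.

Definition cost (n : nat) (A : det_alg n) (k : nat) (s : 'S_n) (i : 'I_n) : nat :=
  sumn [seq size b | b <- run A s i k].

Definition succeeds (n : nat) (A : det_alg n) (k : nat) (s : 'S_n) (i : 'I_n)
  : bool :=
  output A i (run A s i k) == rank_of s i.

From HB Require Import structures.
From mathcomp Require Import all_boot all_order all_algebra all_fingroup.
From mathcomp Require Import all_classical all_reals all_analysis.
From mathcomp Require Import measurable_realfun lebesgue_integral_nonneg.
From mathcomp Require Import ring lra zify.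
Import Order.TTheory GRing.Theory Num.Theory.
Set Implicit Arguments. Unset Strict Implicit. Unset Printing Implicit Defensive.

(* Yao's principle.  Fix the queried index i and take as input the transposition
   tperm i r, for r uniform in 'I_n, so that the correct output is r+1.  In a round
   of q queries a deterministic algorithm sorts the candidates r into at most 2q+1
   classes receiving identical answers: each query singles out at most one r, and the
   remaining candidates are only separated by the thresholds of the queries on x_i.
   By induction on the number of rounds, k rounds over N candidates, S of which are
   answered correctly, cost at least (k/c) N^(1/k) S - N - k S queries in total, for
   any c >= 3; the inductive step combines the classes through the tangent-line
   inequality x^k ((k+1) y - k x) <= y^(k+1).  Averaging over r and over the
   randomness of the algorithm gives the bound. *)

Lemma count_sub_eq (T : eqType) (a b : pred T) (s : seq T) :
  (forall x, x \in s -> b x -> a x) -> count a s = count b s -> {in s, a =1 b}.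
Proof.
move=> ba eq_ab x xs.
have ba_b : {in s, predI b a =1 b}.
  by move=> y ys /=; case by_: (b y); rewrite ?(ba y ys by_).
have /hasPn nb : ~~ has (predC b) [seq y <- s | a y].
  rewrite has_count -leqNgt leqn0 -(eqn_add2l (count b [seq y <- s | a y])).
  by rewrite count_predC size_filter addn0 count_filter (eq_in_count ba_b) eq_ab.
case ax: (a x); first by have := nb x; rewrite mem_filter ax xs /= negbK => ->.
by case bx: (b x) => //; rewrite (ba x xs bx) in ax.
Qed.

Lemma count_ltn_eq (s : seq nat) (x y : nat) :
  count (fun m => x < m) s = count (fun m => y < m) s ->
  {in s, forall m, (x < m) = (y < m)}.
Proof.
wlog le_xy : x y / x <= y.
  move=> W eq_xy m ms; have [le_xy|/ltnW le_yx] := leqP x y.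
    exact: W le_xy eq_xy m ms.
  by rewrite (W _ _ le_yx (esym eq_xy) m ms).
by move=> eq_xy; apply: count_sub_eq eq_xy => m _; apply: leq_ltn_trans.
Qed.

Section RoundClasses.
Variables (n : nat) (i : 'I_n) (Q : seq (query n)).

Definition probed : seq nat :=
  [seq if q.1 == i then q.2.-1 else val q.1 | q <- Q].

Definition thresholds : seq nat := [seq q.2 | q <- Q & q.1 == i].

Definition class_key (r : 'I_n) : nat :=
  if val r \in probed then (size thresholds).+1 + index (val r) probed
  else count (fun m => r.+1 < m) thresholds.

Lemma class_key_lt (r : 'I_n) : class_key r < (size Q).*2.+1.
Proof.
have size_th : size thresholds <= size Q.
  by rewrite size_map size_filter count_size.
have size_pr : size probed = size Q by rewrite size_map.
rewrite /class_key; case: ifP => [rP|_].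
  by move: (index_mem (val r) probed); rewrite rP size_pr; lia.
by move: (count_size (fun m => r.+1 < m) thresholds); lia.
Qed.

Definition round_class (r : 'I_n) : 'I_(size Q).*2.+1 := Ordinal (class_key_lt r).

Lemma round_class_answer (r r' : 'I_n) : round_class r = round_class r' ->
  {in Q, answer (tperm i r) =1 answer (tperm i r')}.
Proof.
move=> /(congr1 val) /= eq_key [j m] jmQ; rewrite /answer /rank_of /=.
have jm_probed : (if j == i then m.-1 else val j) \in probed.
  by apply/mapP; exists (j, m).
move: eq_key; rewrite /class_key.
case: (boolP (val r \in probed)) => rP; case: (boolP (val r' \in probed)) => r'P.
- move=> /addnI eq_index; suff -> : r = r' by [].
  by apply: val_inj; rewrite -(nth_index 0 rP) eq_index nth_index.
- by move: (count_size (fun m => r'.+1 < m) thresholds); lia.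
- by move: (count_size (fun m => r.+1 < m) thresholds); lia.
move=> eq_count; case: (eqVneq j i) => [eq_ji | ji].
  subst j; rewrite !tpermL eqxx in jm_probed *.
  have m_th : m \in thresholds by apply/mapP; exists (i, m); rewrite ?mem_filter ?eqxx.
  have not_m (r0 : 'I_n) : val r0 \notin probed -> (r0.+1 == m) = false.
    by move=> r0P; apply: contraNF r0P => /eqP eq_m; rewrite -eq_m in jm_probed.
  by rewrite (count_ltn_eq eq_count m_th) (not_m _ rP) (not_m _ r'P).
rewrite (negbTE ji) in jm_probed.
rewrite !tpermD // ?(eq_sym i) //.
  by apply: contraNneq r'P => ->.
by apply: contraNneq rP => ->.
Qed.

End RoundClasses.

Local Open Scope ring_scope.

Lemma exprS_tangent_le (R : realDomainType) (x y : R) (k : nat) :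
  0 <= x -> 0 <= y -> x ^+ k.+1 + k.+1%:R * x ^+ k * (y - x) <= y ^+ k.+1.
Proof.
move=> x_ge0 y_ge0; elim: k => [|k IH].
  by rewrite expr0 !expr1 mulr1 mul1r addrC subrK.
have gap : y ^+ k.+2 - (x ^+ k.+2 + k.+2%:R * x ^+ k.+1 * (y - x)) =
    y * (y ^+ k.+1 - (x ^+ k.+1 + k.+1%:R * x ^+ k * (y - x)))
    + k.+1%:R * x ^+ k * (y - x) ^+ 2.
  by rewrite !exprS; ring.
rewrite -subr_ge0 gap; apply: addr_ge0; first by rewrite mulr_ge0 ?subr_ge0.
by rewrite mulr_ge0 ?sqr_ge0 // mulr_ge0 ?exprn_ge0.
Qed.

Lemma powR_invnK (R : realType) (x : R) (k : nat) :
  0 <= x -> (0 < k)%N -> (x `^ k%:R^-1) ^+ k = x.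
Proof.
move=> x_ge0 k_gt0; rewrite -powR_mulrn ?powR_ge0 // -powRrM mulVf ?powRr1 //.
by rewrite pnatr_eq0 -lt0n.
Qed.

Section QueryBound.
Variables (R : realType) (c : R).
Hypothesis c_gt0 : 0 < c.

Definition query_lb (k : nat) (N S : R) : R :=
  k%:R / c * N `^ k%:R^-1 * S - N - k%:R * S.

Lemma query_lbS_le (k : nat) (N S : R) : 1 <= c -> (0 < k)%N ->
  0 <= N -> 0 <= S -> query_lb k.+1 N S <= query_lb k N S.
Proof.
move=> c_ge1 k_gt0 N_ge0 S_ge0.
set x := N `^ k%:R^-1; set y := N `^ k.+1%:R^-1.
suff gap : k.+1%:R * y - k%:R * x <= c.
  rewrite /query_lb -/x -/y -subr_ge0.
  have -> : k%:R / c * x * S - N - k%:R * S - (k.+1%:R / c * y * S - N - k.+1%:R * S)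
      = S * (c - (k.+1%:R * y - k%:R * x)) / c.
    by rewrite -natr1; field; exact: lt0r_neq0.
  by rewrite divr_ge0 ?mulr_ge0 ?subr_ge0 // ltW.
have [N0|N_neq0] := eqVneq N 0.
  rewrite /x /y N0 !powR0 ?invr_eq0 ?pnatr_eq0 -?lt0n // !mulr0 subr0.
  by apply: le_trans c_ge1.
have x_gt0 : 0 < x ^+ k by rewrite exprn_gt0 // powR_gt0 // lt0r N_neq0.
have xy : x ^+ k = y ^+ k.+1 by rewrite /x /y !powR_invnK.
have : x ^+ k * (x + k.+1%:R * (y - x)) <= x ^+ k * 1.
  have -> : x ^+ k * (x + k.+1%:R * (y - x)) = x ^+ k.+1 + k.+1%:R * x ^+ k * (y - x).
    by rewrite exprS; ring.
  rewrite mulr1 [in X in _ <= X]xy.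
  exact: exprS_tangent_le k (powR_ge0 _ _) (powR_ge0 _ _).
rewrite ler_pM2l // -natr1 => tangent.
lra.
Qed.

Lemma query_lbS_le_class (k : nat) (N Nj Sj : R) : (0 < k)%N ->
  0 <= N -> 0 <= Sj <= Nj ->
  k.+1%:R / c * N `^ k.+1%:R^-1 * Sj - Nj - k.+1%:R * Sj
    <= query_lb k Nj Sj + N / c.
Proof.
move=> k_gt0 N_ge0 /andP[Sj_ge0 Sj_le].
have Nj_ge0 : 0 <= Nj by apply: le_trans Sj_le.
set x := Nj `^ k%:R^-1; set y := N `^ k.+1%:R^-1.
suff gap : Sj * (k.+1%:R * y - k%:R * x - c) <= N.
  rewrite /query_lb -/x -subr_ge0.
  have -> : k%:R / c * x * Sj - Nj - k%:R * Sj + N / c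
      - (k.+1%:R / c * y * Sj - Nj - k.+1%:R * Sj)
      = (N - Sj * (k.+1%:R * y - k%:R * x - c)) / c.
    by rewrite -natr1; field; exact: lt0r_neq0.
  by rewrite divr_ge0 ?subr_ge0 // ltW.
have [gap_le0|gap_gt0] := leP (k.+1%:R * y - k%:R * x - c) 0.
  by apply: le_trans N_ge0; rewrite mulr_ge0_le0.
have tangent : x ^+ k.+1 + k.+1%:R * x ^+ k * (y - x) <= N.
  rewrite -[X in _ <= X](powR_invnK N_ge0 (ltn0Sn k)).
  exact: exprS_tangent_le k (powR_ge0 _ _) (powR_ge0 _ _).
apply: (@le_trans _ _ (x ^+ k * (k.+1%:R * y - k%:R * x - c))).
  by rewrite powR_invnK // ler_wpM2r // ltW.
apply: le_trans tangent; rewrite -subr_ge0.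
have -> : x ^+ k.+1 + k.+1%:R * x ^+ k * (y - x) - x ^+ k * (k.+1%:R * y - k%:R * x - c)
    = c * x ^+ k by rewrite exprS -natr1; ring.
by rewrite mulr_ge0 ?exprn_ge0 ?powR_ge0 // ltW.
Qed.

Lemma query_lbS_le_sum (J : finType) (k : nat) (N S : J -> R) : (0 < k)%N ->
  (forall j, 0 <= S j <= N j) ->
  query_lb k.+1 (\sum_j N j) (\sum_j S j)
    <= \sum_j query_lb k (N j) (S j) + #|J|%:R * (\sum_j N j) / c.
Proof.
move=> k_gt0 SN; set NJ := \sum_j N j.
have NJ_ge0 : 0 <= NJ.
  by apply: sumr_ge0 => j _; case/andP: (SN j) => S_ge0; apply: le_trans.
have -> : query_lb k.+1 NJ (\sum_j S j)
    = \sum_j (k.+1%:R / c * NJ `^ k.+1%:R^-1 * S j - N j - k.+1%:R * S j).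
  by rewrite /query_lb !sumrB -!mulr_sumr.
have -> : #|J|%:R * NJ / c = \sum_(j : J) NJ / c.
  by rewrite sumr_const -mulrA mulr_natl.
by rewrite -big_split /=; apply: ler_sum => j _; exact: query_lbS_le_class.
Qed.

End QueryBound.

Lemma sum_bool_le1 (R : numDomainType) (I : finType) (A : {pred I}) (b : pred I) :
  {in A &, forall r r', b r -> b r' -> r = r'} -> \sum_(r in A) (b r)%:R <= 1 :> R.
Proof.
move=> b_inj; case: (pickP [pred r in A | b r]) => [r0 /andP[r0A br0] | none].
  rewrite (bigD1 r0) //= br0 big1 ?addr0 // => r /andP[rA r_neq0].
  by case br: (b r); rewrite // (b_inj _ _ rA r0A br br0) eqxx in r_neq0.
by rewrite big1 ?ler01 // => r rA; have := none r; rewrite /= rA /= => ->.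
Qed.

Definition tsize (n : nat) (t : transcript n) : nat := sumn [seq size b | b <- t].

Section DeterministicRounds.
Variables (R : realType) (n : nat) (D : det_alg n) (i : 'I_n).

Definition play_round (r : 'I_n) (t : transcript n) : transcript n :=
  rcons t [seq (q, answer (tperm i r) q) | q <- next_queries D i t].

Lemma run_tperm (r : 'I_n) (k : nat) :
  run D (tperm i r) i k = iter k (play_round r) [::].
Proof. by elim: k => //= k ->. Qed.

Lemma tsize_play_round (r : 'I_n) (t : transcript n) :
  tsize (play_round r t) = tsize t + size (next_queries D i t).
Proof. by rewrite /tsize /play_round map_rcons sumn_rcons size_map. Qed.

Notation class_at t := (round_class i (next_queries D i t)).

Lemma play_round_class (t : transcript n) (r r' : 'I_n) :
  class_at t r = class_at t r' -> play_round r t = play_round r' t.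
Proof.
by move/round_class_answer => eq_ans; congr rcons; apply/eq_in_map => q /eq_ans ->.
Qed.

Definition succeeds_after (k : nat) (r : 'I_n) (t : transcript n) : bool :=
  output D i (iter k (play_round r) t) == (val r).+1.

Definition successes (k : nat) (X : {set 'I_n}) (t : transcript n) : R :=
  \sum_(r in X) (succeeds_after k r t)%:R.

Definition queries_after (k : nat) (X : {set 'I_n}) (t : transcript n) : R :=
  \sum_(r in X) ((tsize (iter k (play_round r) t))%:R - (tsize t)%:R).

Lemma successes_ge0 (k : nat) (X : {set 'I_n}) (t : transcript n) :
  0 <= successes k X t.
Proof. by apply: sumr_ge0 => r _; rewrite ler0n. Qed.

Lemma successes_le_card (k : nat) (X : {set 'I_n}) (t : transcript n) :
  successes k X t <= #|X|%:R.
Proof. by rewrite -sumr_const; apply: ler_sum => r _; rewrite lern1 leq_b1. Qed.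

Definition class_set (t : transcript n) (X : {set 'I_n})
    (q : 'I_(size (next_queries D i t)).*2.+1) : {set 'I_n} :=
  [set r in X | class_at t r == q].
Arguments class_set : clear implicits.

Definition class_play (t : transcript n) (X : {set 'I_n}) q : transcript n :=
  play_round (odflt i [pick r in class_set t X q]) t.
Arguments class_play : clear implicits.

Lemma sum_over_classes (t : transcript n) (X : {set 'I_n}) (F : 'I_n -> R) :
  \sum_(r in X) F r = \sum_q \sum_(r in class_set t X q) F r.
Proof.
rewrite (partition_big (class_at t) xpredT) //.
by apply: eq_bigr => q _; apply: eq_bigl => r; rewrite inE.
Qed.

Lemma card_classes (t : transcript n) (X : {set 'I_n}) :
  #|X|%:R = \sum_q #|class_set t X q|%:R :> R.
Proof.
have := sum_over_classes t X (fun _ => 1); rewrite sumr_const => ->.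
by apply: eq_bigr => q _; rewrite sumr_const.
Qed.

Lemma play_round_in_class (t : transcript n) (X : {set 'I_n}) q (r : 'I_n) :
  r \in class_set t X q -> play_round r t = class_play t X q.
Proof.
rewrite /class_play; case: pickP => [r0 r0q | none] rq /=; last first.
  by have := none r; rewrite rq.
apply: play_round_class; move: r0q rq; rewrite !inE.
by move=> /andP[_ /eqP ->] /andP[_ /eqP ->].
Qed.

Lemma successes_one_class (t : transcript n) (X : {set 'I_n}) q :
  successes 1 (class_set t X q) t <= 1.
Proof.
apply: sum_bool_le1 => r r' rq r'q; rewrite /succeeds_after /=.
rewrite (play_round_in_class rq) (play_round_in_class r'q).
by move=> /eqP -> /eqP [] /val_inj.
Qed.

Lemma successes_S (k : nat) (t : transcript n) (X : {set 'I_n}) :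
  successes k.+1 X t = \sum_q successes k (class_set t X q) (class_play t X q).
Proof.
rewrite /successes (sum_over_classes t); apply: eq_bigr => q _.
by apply: eq_bigr => r rq; rewrite /succeeds_after iterSr (play_round_in_class rq).
Qed.

Lemma queries_after_S (k : nat) (t : transcript n) (X : {set 'I_n}) :
  queries_after k.+1 X t = \sum_q (queries_after k (class_set t X q) (class_play t X q)
    + #|class_set t X q|%:R * (size (next_queries D i t))%:R).
Proof.
rewrite /queries_after (sum_over_classes t); apply: eq_bigr => q _.
rewrite mulr_natl -sumr_const -big_split; apply: eq_bigr => r rq.
rewrite iterSr (play_round_in_class rq) /class_play tsize_play_round natrD /=.
ring.
Qed.

Lemma successes1_le (t : transcript n) (X : {set 'I_n}) :
  successes 1 X t <= (size (next_queries D i t)).*2.+1%:R.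
Proof.
rewrite /successes (sum_over_classes t).
apply: (@le_trans _ _ (\sum_(q : 'I_(size (next_queries D i t)).*2.+1) 1)).
  by apply: ler_sum => q _; exact: successes_one_class.
by rewrite sumr_const card_ord.
Qed.

Variable c : R.
Hypothesis c_ge3 : 3 <= c.

Let c_gt0 : 0 < c. Proof. by apply: lt_le_trans c_ge3. Qed.

Lemma query_lb1_le (t : transcript n) (X : {set 'I_n}) :
  query_lb c 1 #|X|%:R (successes 1 X t) <= queries_after 1 X t.
Proof.
set s := size (next_queries D i t); set S := successes 1 X t; set N : R := #|X|%:R.
have -> : queries_after 1 X t = N * s%:R.
  rewrite /queries_after (eq_bigr (fun _ => s%:R)) ?sumr_const ?mulr_natl // => r _.
  by rewrite /= tsize_play_round natrD addrAC subrr add0r.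
have S_le : S <= s.*2.+1%:R := successes1_le t X.
have S_ge0 : 0 <= S := successes_ge0 1 X t.
have N_ge0 : 0 <= N := ler0n _ _.
rewrite -addnn -natr1 natrD in S_le.
rewrite /query_lb invr1 powRr1 // mul1r.
have S_c : S / c <= s%:R + 1.
  have s_ge0 : 0 <= s%:R :> R := ler0n _ _.
  have c3_ge0 : 0 <= c - 3 by rewrite subr_ge0.
  have := mulr_ge0 (addr_ge0 s_ge0 ler01) c3_ge0.
  by rewrite ler_pdivrMr //; lra.
have := ler_wpM2l N_ge0 S_c.
lra.
Qed.

Lemma query_lb_le_empty_round (k : nat) (t : transcript n) (X : {set 'I_n}) :
  (0 < k)%N -> next_queries D i t = [::] ->
  (forall (X' : {set 'I_n}) (t' : transcript n),
    query_lb c k #|X'|%:R (successes k X' t') <= queries_after k X' t') ->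
  query_lb c k.+1 #|X|%:R (successes k.+1 X t) <= queries_after k.+1 X t.
Proof.
move=> k_gt0 no_queries IH; set t' := rcons t [::].
have play_t r : play_round r t = t' by rewrite /play_round no_queries.
have tsize_t' : tsize t' = tsize t by rewrite /tsize map_rcons sumn_rcons addn0.
have -> : successes k.+1 X t = successes k X t'.
  by apply: eq_bigr => r _; rewrite /succeeds_after iterSr play_t.
have -> : queries_after k.+1 X t = queries_after k X t'.
  by apply: eq_bigr => r _; rewrite iterSr play_t tsize_t'.
apply: le_trans (IH X t'); apply: query_lbS_le => //; last exact: successes_ge0.
by apply: le_trans c_ge3; lra.
Qed.

Lemma query_lb_le_nonempty_round (k : nat) (t : transcript n) (X : {set 'I_n}) :
  (0 < k)%N -> next_queries D i t != [::] ->
  (forall (X' : {set 'I_n}) (t' : transcript n),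
    query_lb c k #|X'|%:R (successes k X' t') <= queries_after k X' t') ->
  query_lb c k.+1 #|X|%:R (successes k.+1 X t) <= queries_after k.+1 X t.
Proof.
move=> k_gt0 some_queries IH.
rewrite successes_S queries_after_S (card_classes t X) big_split /=.
apply: le_trans (query_lbS_le_sum c_gt0 k_gt0 _) _ => [q|].
  by rewrite successes_ge0 successes_le_card.
apply: lerD; first by apply: ler_sum => q _; exact: IH.
rewrite card_ord -mulr_suml -(card_classes t X) ler_pdivrMr //.
have classes_le : (size (next_queries D i t)).*2.+1%:R
    <= 3 * (size (next_queries D i t))%:R :> R.
  rewrite -natrM ler_nat -addnn; move: some_queries; rewrite -size_eq0 -lt0n.
  by move: (size _) => s; lia.
apply: (@le_trans _ _ (3 * (size (next_queries D i t))%:R * #|X|%:R)).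
  by rewrite ler_wpM2r.
have c3_ge0 : 0 <= c - 3 by rewrite subr_ge0.
have := mulr_ge0 (mulr_ge0 (ler0n R #|X|) (ler0n R (size (next_queries D i t))))
  c3_ge0.
lra.
Qed.

Lemma query_lb_le (k : nat) (X : {set 'I_n}) (t : transcript n) : (0 < k)%N ->
  query_lb c k #|X|%:R (successes k X t) <= queries_after k X t.
Proof.
elim: k X t => [//|[|k] IH] X t _; first exact: query_lb1_le.
have {}IH X' t' := IH X' t' isT.
have [no_queries|some_queries] := eqVneq (next_queries D i t) [::].
  exact: query_lb_le_empty_round.
exact: query_lb_le_nonempty_round.
Qed.

Lemma query_lb_le_cost (k : nat) : (0 < k)%N ->
  query_lb c k n%:R (\sum_r (succeeds D k (tperm i r) i)%:R)
    <= \sum_r (cost D k (tperm i r) i)%:R.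
Proof.
move=> k_gt0.
have sumT (F : 'I_n -> R) : \sum_(r in [set: 'I_n]) F r = \sum_r F r.
  by apply: eq_bigl => r; rewrite inE.
have -> : \sum_r (succeeds D k (tperm i r) i)%:R = successes k [set: 'I_n] [::].
  rewrite /successes sumT; apply: eq_bigr => r _.
  by rewrite /succeeds run_tperm /rank_of tpermL.
have -> : \sum_r (cost D k (tperm i r) i)%:R = queries_after k [set: 'I_n] [::].
  by rewrite /queries_after sumT; apply: eq_bigr => r _; rewrite /cost run_tperm subr0.
by have := query_lb_le [set: 'I_n] [::] k_gt0; rewrite cardsT card_ord.
Qed.

End DeterministicRounds.

Lemma exists_ge_average (R : realDomainType) (J : finType) (f : J -> \bar R) (B : R) :
  (forall j, 0 <= f j)%E -> (0 < #|J|)%N ->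
  ((#|J|%:R * B)%:E <= \sum_j f j)%E -> exists j, (B%:E <= f j)%E.
Proof.
move=> f_ge0 /card_gt0P[j0 _] avg; apply: contrapT => /forallNP f_lt.
have {}f_lt j : (f j < B%:E)%E by rewrite ltNge; apply/negP/f_lt.
have f_fin j : f j = (fine (f j))%:E.
  by rewrite fineK // ge0_fin_numE // (lt_trans (f_lt j)) ?ltry.
move: avg; rewrite (eq_bigr _ (fun j _ => f_fin j)) sumEFin lee_fin; apply/negP.
rewrite -ltNge; apply: (@lt_le_trans _ _ (\sum_(j : J) B)).
  by apply: ltr_sum => [|j _]; [apply/hasP; exists j0 | rewrite -lte_fin -f_fin].
by rewrite sumr_const mulr_natl.
Qed.

Section ExpectedCost.
Local Open Scope classical_set_scope.
Local Open Scope ereal_scope.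
Variables (R : realType) (d : measure_display) (Omega : measurableType d).
Variable P : probability Omega R.

Lemma indic_boolE (E : Omega -> bool) (w : Omega) :
  ((E w)%:R : R) = \1_[set w | E w] w.
Proof.
rewrite indicE; case: (boolP (E w)) => Ew; first by rewrite mem_set.
by rewrite memNset //=; apply/negP.
Qed.

Lemma integral_bool (E : Omega -> bool) : measurable [set w | E w] ->
  \int[P]_w ((E w)%:R : R)%:E = P [set w | E w].
Proof.
move=> mE; under eq_integral do rewrite indic_boolE.
by rewrite integral_indic // setIT.
Qed.

Lemma expected_costs_ge (J : finType) (S : J -> Omega -> bool) (C : J -> Omega -> R)
    (a b p : R) :
  (0 <= a)%R -> (0 <= b)%R ->
  (forall j, measurable [set w | S j w]) ->
  (forall j, measurable_fun setT (C j)) ->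
  (forall j w, (0 <= C j w)%R) ->
  (forall j, p%:E <= P [set w | S j w]) ->
  (forall w, (a * \sum_j ((S j w)%:R : R) <= \sum_j C j w + b)%R) ->
  (a * (#|J|%:R * p) - b)%:E <= \sum_j \int[P]_w (C j w)%:E.
Proof.
move=> a_ge0 b_ge0 mS mC C_ge0 P_S pointwise.
have mSE j : measurable_fun setT (fun w => ((S j w)%:R : R)%:E).
  apply/measurable_EFinP; under eq_fun do rewrite indic_boolE.
  exact: measurable_indic.
have mCE j : measurable_fun setT (fun w => (C j w)%:E) by apply/measurable_EFinP.
have SE_ge0 w : 0 <= \sum_j ((S j w)%:R : R)%:E by apply: sume_ge0.
have CE_ge0 w : 0 <= \sum_j (C j w)%:E by apply: sume_ge0 => j _; rewrite lee_fin.
have int_successes : \int[P]_w (a%:E * \sum_j ((S j w)%:R : R)%:E)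
    = a%:E * \sum_j P [set w | S j w].
  rewrite ge0_integralZl //; last exact: emeasurable_sum.
  rewrite ge0_integral_sum //; congr (_ * _).
  by apply: eq_bigr => j _; exact: integral_bool.
have int_costs : \int[P]_w (\sum_j (C j w)%:E + b%:E)
    = \sum_j \int[P]_w (C j w)%:E + b%:E.
  rewrite ge0_integralD //; last exact: emeasurable_sum.
  rewrite ge0_integral_sum // => [|j w _]; last by rewrite lee_fin.
  congr (_ + _); rewrite -[RHS]mule1 -(probability_setT P).
  exact: (integral_cst P measurableT b%:E).
have : \int[P]_w (a%:E * \sum_j ((S j w)%:R : R)%:E)
    <= \int[P]_w (\sum_j (C j w)%:E + b%:E).
  apply: ge0_le_integral => //.
  - by move=> w _; rewrite mule_ge0.
  - by apply: measurable_funeM; exact: emeasurable_sum.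
  - by apply: emeasurable_funD => //; exact: emeasurable_sum.
  - by move=> w _; rewrite !sumEFin -EFinM -EFinD lee_fin; exact: pointwise.
rewrite int_successes int_costs EFinB leeBlDr //; apply: le_trans.
rewrite EFinM; apply: lee_wpmul2l; first by rewrite lee_fin.
apply: (@le_trans _ _ (\sum_(j : J) p%:E)); first by rewrite sumEFin sumr_const mulr_natl.
by apply: lee_sum => j _; exact: P_S.
Qed.

End ExpectedCost.

Local Open Scope classical_set_scope.

Theorem proposition3 (R : realType) (d : measure_display) (Omega : measurableType d)
    (P : probability Omega R) (n k : nat) (p : R) (A : Omega -> det_alg n) :
  (1 < n)%N -> (1 <= k)%N -> (k <= up_log 2 n)%N ->
  0 <= p -> p <= 1 ->
  (forall (s : 'S_n) (i : 'I_n),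
      measurable [set w | succeeds (A w) k s i]) ->
  (forall (s : 'S_n) (i : 'I_n),
      measurable_fun setT (fun w => ((cost (A w) k s i)%:R : R))) ->
  (forall (s : 'S_n) (i : 'I_n),
      (p%:E <= P [set w | succeeds (A w) k s i])%E) ->
  exists (s : 'S_n) (i : 'I_n),
    ((k%:R / (4 * expR 1) * p * (n%:R `^ (k%:R)^-1) - 1 - p * k%:R)%:E
      <= \int[P]_w ((cost (A w) k s i)%:R : R)%:E)%E.
Proof.
move=> n_gt1 k_gt0 _ p_ge0 _ mS mC P_S; pose i : 'I_n := Ordinal (ltnW n_gt1).
pose a : R := k%:R / (4 * expR 1) * n%:R `^ k%:R^-1 - k%:R.
have -> : k%:R / (4 * expR 1) * p * n%:R `^ k%:R^-1 - 1 - p * k%:R = a * p - 1.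
  by rewrite /a; ring.
have [a_lt0|a_ge0] := ltP a 0.
  exists 1%g, i; apply: le_trans (integral_ge0 _ _) => [|w _]; last by rewrite lee_fin.
  by rewrite lee_fin; nra.
(* The paper's constant 4e only enters through 4e >= 3. *)
have c_ge3 : 3 <= 4 * expR 1 :> R by have := expR_ge1Dx (1 : R); lra.
have total : ((#|'I_n|%:R * (a * p - 1))%:E
    <= \sum_r \int[P]_w ((cost (A w) k (tperm i r) i)%:R : R)%:E)%E.
  have -> : #|'I_n|%:R * (a * p - 1) = a * (#|'I_n|%:R * p) - n%:R.
    by rewrite card_ord; ring.
  apply: (expected_costs_ge (S := fun r w => succeeds (A w) k (tperm i r) i)) => // w.
  by have := query_lb_le_cost (A w) i c_ge3 k_gt0; rewrite /query_lb /a; lra.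
have cost_ge0 r : (0 <= \int[P]_w ((cost (A w) k (tperm i r) i)%:R : R)%:E)%E.
  by apply: integral_ge0 => w _; rewrite lee_fin.
have n_gt0 : (0 < #|'I_n|)%N by rewrite card_ord (ltnW n_gt1).
have [r r_ge] := exists_ge_average cost_ge0 n_gt0 total.
by exists (tperm i r), i.
Qed.
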